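(* Let $\mathcal{G}=(V,E_L,E_R)$ and $\mathcal{G}'=(V',E'_L,E'_R)$ be achievement positional games with $V\cap V'=\varnothing$. Suppose Left has a winning strategy on $\mathcal{G}$ as first player and Right has a winning strategy on $\mathcal{G}'$ as first player. Let $d$ be the Left-delay of $\mathcal{G}$ and $d'$ the Right-delay of $\mathcal{G}'$. If $d\le d'$, then Left has a winning strategy on $\mathcal{G}\cup\mathcal{G}'$ as first player; if $d'\le d$, then Right has a winning strategy on $\mathcal{G}\cup\mathcal{G}'$ as first player. In particular, at least one of Left and Right has a winning strategy as first player on $\mathcal{G}\cup\mathcal{G}'$.
   Context: A hypergraph is a pair $(V,E)$ with $V$ finite and $E\subseteq 2^V\setminus\{\varnothing\}$. An achievement positional game is a triple $\mathcal{G}=(V,E_L,E_R)$ where $(V,E_L)$ and $(V,E_R)$ are hypergraphs; elements of $E_L$ are blue edges, elements of $E_R$ are red edges. Two players, Left and Right, alternately pick a previously unpicked vertex of $V$ (either player may be designated to start). A player fills an edge when they have picked all its vertices. If Left fills a blue edge before Right fills a red edge, Left wins; if Right fills a red edge before Left fills a blue edge, Right wins; if neither happens before all vertices are picked, the game is a draw. The disjoint union of games with disjoint vertex sets is $\mathcal{G}\cup\mathcal{G}'=(V\cup V',E_L\cup E'_L,E_R\cup E'_R)$. Left-delay: if Left has a winning strategy on $\mathcal{G}$ as first player, consider the scoring game in which Left moves first and plays normally, while Right, on each of her turns, may either pick an unpicked vertex or pass. The game ends when Left fills a blue edge, Right fills a red edge, or all vertices are picked. The score is $+\infty$ if Left has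 not filled a blue edge, and otherwise the total number of passes made by Right. Left minimizes and Right maximizes the score; the Left-delay of $\mathcal{G}$ is the value of this game under optimal play (finite under the hypothesis). The Right-delay of a game on which Right has a winning strategy as first player is defined symmetrically (roles of Left/Right and blue/red swapped). *)

From mathcomp Require Import all_boot.
Set Implicit Arguments. Unset Strict Implicit. Unset Printing Implicit Defensive.

(* An achievement positional game on the finite vertex type V:
   blue edges (Left's) and red edges (Right's). *)
Record game (V : finType) := Game { blue : {set {set V}}; red : {set {set V}} }.

Definition hypergraph_game (V : finType) (G : game V) : Prop :=
  set0 \notin blue G /\ set0 \notin red G.

Definition swap (V : finType) (G : game V) : game V := Game (red G) (blue G).

Definition gunion (V V' : finType) (G : game V) (G' : game V') : game (V + V')%type :=
  Game ([set (@inl V V') @: e | e : {set V} in blue G] :|: [set (@inr V V') @: e | e : {set V'} in blue G'])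
       ([set (@inl V V') @: e | e : {set V} in red G] :|: [set (@inr V V') @: e | e : {set V'} in red G']).

Definition filled (V : finType) (E : {set {set V}}) (A : {set V}) : Prop :=
  exists2 e, e \in E & e \subset A.

Section Play.
Variables (V : finType) (G : game V).

(* Positions: L = vertices picked by Left, R = vertices picked by Right,
   no edge filled yet.  lwinL L R: Left, to move, can force a Left win;
   lwinR L R: Right to move, Left can force a Left win. *)
Inductive lwinL : {set V} -> {set V} -> Prop :=
| LwinL L R v : v \notin L :|: R ->
    (filled (blue G) (v |: L) \/ lwinR (v |: L) R) -> lwinL L R
with lwinR : {set V} -> {set V} -> Prop :=
| LwinR L R : (exists w, w \notin L :|: R) ->
    (forall w, w \notin L :|: R ->
        ~ filled (red G) (w |: R) /\ lwinL L (w |: R)) -> lwinR L R.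

Definition left_wins_first : Prop := lwinL set0 set0.

(* Scoring game with passes for Right.  ldelL k L R (Left to move) /
   ldelR k L R (Right to move): Left can force that she fills a blue edge
   with Right making at most k further passes (i.e. score <= k from here). *)
Inductive ldelL : nat -> {set V} -> {set V} -> Prop :=
| LdelL k L R v : v \notin L :|: R ->
    (filled (blue G) (v |: L) \/ ldelR k (v |: L) R) -> ldelL k L R
with ldelR : nat -> {set V} -> {set V} -> Prop :=
| LdelR k L R : (exists w, w \notin L :|: R) ->
    (forall w, w \notin L :|: R ->
        ~ filled (red G) (w |: R) /\ ldelL k L (w |: R)) ->
    (* Right passing: costs one unit of the budget *)
    (exists2 k', k = k'.+1 & ldelL k' L R) ->
    ldelR k L R.

Definition left_delay (d : nat) : Prop :=
  ldelL d set0 set0 /\ forall k, ldelL k set0 set0 -> d <= k.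

End Play.

Definition right_wins_first (V : finType) (G : game V) : Prop :=
  left_wins_first (swap G).
Definition right_delay (V : finType) (G : game V) (d : nat) : Prop :=
  left_delay (swap G) d.

From Stdlib Require Import Classical.
From mathcomp Require Import all_boot.

Set Implicit Arguments. Unset Strict Implicit. Unset Printing Implicit Defensive.

(* Left plays her delay strategy on G and treats every move of Right on G' as
   a pass.  She keeps the invariant that the number b of passes she can still
   afford on G is at most Right's remaining delay on G'.  After Right moves on
   G', Left either answers on G' without lowering that delay, or she can afford
   to pass on G' and plays on G; if neither is possible, Right's delay on G'
   would already be below b. *)

Lemma ltn_card_setC_setU1 (T : finType) (P : {set T}) x :
  x \notin P -> #|~: (x |: P)| < #|~: P|.
Proof.
move=> hx; rewrite (cardsD1 x (~: P)) inE hx add1n ltnS.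
by rewrite setCU setIC -setDE.
Qed.

Section Delay.
Variables (V : finType) (G : game V).

Lemma ldelL_inv k L R : ldelL G k L R ->
  exists2 v, v \notin L :|: R &
    filled (blue G) (v |: L) \/ ldelR G k (v |: L) R.
Proof. by case=> k0 L0 R0 v hv h; exists v. Qed.

Lemma ldelR_inv k L R : ldelR G k L R ->
  [/\ exists w, w \notin L :|: R,
      forall w, w \notin L :|: R ->
        ~ filled (red G) (w |: R) /\ ldelL G k L (w |: R)
    & exists2 k', k = k'.+1 & ldelL G k' L R].
Proof. by case=> k0 L0 R0 h1 h2 h3; split. Qed.

Lemma ldelR0 L R : ~ ldelR G 0 L R.
Proof. by case/ldelR_inv=> _ _ []. Qed.

Lemma ldel_leq n k m L R : #|~: (L :|: R)| < n -> k <= m ->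
  (ldelL G k L R -> ldelL G m L R) /\ (ldelR G k L R -> ldelR G m L R).
Proof.
elim: n => [// | n IH] in k m L R *; rewrite ltnS => hn km.
have moveL k0 m0 : k0 <= m0 -> ldelL G k0 L R -> ldelL G m0 L R.
  move=> km0 /ldelL_inv [v hv hvL]; apply: (LdelL (v := v)) => //.
  have hvn : #|~: (v |: L :|: R)| < n.
    by apply: leq_trans hn; rewrite -setUA; apply: ltn_card_setC_setU1.
  by case: hvL => [| /(proj2 (IH _ _ _ _ hvn km0))]; [left | right].
split; first exact: moveL.
case/ldelR_inv=> hex hall [k' ek' hk']; subst k; apply: LdelR => //.
  move=> w hw; have [hnf hwk] := hall w hw; split=> //.
  have hwn : #|~: (L :|: (w |: R))| < n.
    by apply: leq_trans hn; rewrite setUCA; apply: ltn_card_setC_setU1.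
  exact: (proj1 (IH _ _ _ _ hwn km)).
by case: m km => // m km; exists m => //; apply: moveL hk'.
Qed.

Lemma ldelL_leq k m L R : k <= m -> ldelL G k L R -> ldelL G m L R.
Proof. by move=> km; case: (@ldel_leq #|~: (L :|: R)|.+1 k m L R). Qed.

Lemma ldelR_of_replies k L R :
  (forall w, w \notin L :|: R ->
     ~ filled (red G) (w |: R) /\ exists2 c, c <= k & ldelL G c L (w |: R)) ->
  (exists2 c, c < k & ldelL G c L R) ->
  ldelR G k L R.
Proof.
move=> hall [c ck hc]; apply: LdelR.
- by have [w hw _] := ldelL_inv hc; exists w.
- by move=> w /hall [hnf [c' c'k hc']]; split; last exact: ldelL_leq hc'.
- by case: k hall ck => // k _ ck; exists k => //; exact: ldelL_leq hc.
Qed.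

End Delay.

Lemma not_lower_bound (P : nat -> Prop) b :
  ~ (forall c, P c -> b <= c) -> exists2 c, c < b & P c.
Proof.
move=> nlb; apply: NNPP => nex; apply: nlb => c hc.
by rewrite leqNgt; apply/negP => cb; apply: nex; exists c.
Qed.

Lemma not_filled_set0 (T : finType) (E : {set {set T}}) :
  set0 \notin E -> ~ filled E set0.
Proof. by move=> hE [e he]; rewrite subset0 => /eqP e0; rewrite -e0 he in hE. Qed.

(* H is the disjoint union of A and B, where B enters with its roles swapped:
   Left of H is Left of A and Right of B. *)
Section Union.
Variables (X Y W : finType) (H : game W) (A : game X) (B : game Y).
Variables (iA : X -> W) (iB : Y -> W).
Hypothesis iA_inj : injective iA.
Hypothesis iB_inj : injective iB.
Hypothesis iAB_neq : forall x y, iA x != iB y.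
Hypothesis iAB_cover : forall w, (exists x, w = iA x) \/ (exists y, w = iB y).
Hypothesis blueH :
  blue H = [set iA @: e | e : {set X} in blue A] :|: [set iB @: e | e : {set Y} in red B].
Hypothesis redH :
  red H = [set iA @: e | e : {set X} in red A] :|: [set iB @: e | e : {set Y} in blue B].

Definition emb (P : {set X}) (Q : {set Y}) : {set W} := iA @: P :|: iB @: Q.

Lemma mem_embA x P Q : (iA x \in emb P Q) = (x \in P).
Proof.
rewrite inE (mem_imset _ _ iA_inj); case: (x \in P) => //=.
by apply/negP=> /imsetP [y _ e]; move: (iAB_neq x y); rewrite e eqxx.
Qed.

Lemma mem_embB y P Q : (iB y \in emb P Q) = (y \in Q).
Proof.
rewrite inE (mem_imset _ _ iB_inj) orbC; case: (y \in Q) => //=.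
by apply/negP=> /imsetP [x _ e]; move: (iAB_neq x y); rewrite e eqxx.
Qed.

Lemma embA x P Q : iA x |: emb P Q = emb (x |: P) Q.
Proof. by rewrite /emb imsetU1 setUA. Qed.

Lemma embB y P Q : iB y |: emb P Q = emb P (y |: Q).
Proof. by rewrite /emb imsetU1 setUCA. Qed.

Lemma notin_embA x L R L' R' :
  (iA x \notin emb L L' :|: emb R R') = (x \notin L :|: R).
Proof. by rewrite in_setU !mem_embA -in_setU. Qed.

Lemma notin_embB y L R L' R' :
  (iB y \notin emb L L' :|: emb R R') = (y \notin L' :|: R').
Proof. by rewrite in_setU !mem_embB -in_setU. Qed.

Lemma filled_blueA P Q : filled (blue A) P -> filled (blue H) (emb P Q).
Proof.
case=> e he hs; exists (iA @: e); first by rewrite blueH inE imset_f.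
exact: subset_trans (imsetS _ hs) (subsetUl _ _).
Qed.

Lemma filled_redB P Q : filled (red B) Q -> filled (blue H) (emb P Q).
Proof.
case=> e he hs; exists (iB @: e); first by rewrite blueH inE imset_f ?orbT.
exact: subset_trans (imsetS _ hs) (subsetUr _ _).
Qed.

Lemma not_filled_redH P Q :
  ~ filled (red A) P -> ~ filled (blue B) Q -> ~ filled (red H) (emb P Q).
Proof.
move=> nA nB [f]; rewrite redH => /setUP [] /imsetP [e he ->] hs.
  by apply: nA; exists e => //; apply/subsetP=> x /(imset_f iA)/(subsetP hs); rewrite mem_embA.
by apply: nB; exists e => //; apply/subsetP=> y /(imset_f iB)/(subsetP hs); rewrite mem_embB.
Qed.

(* L, R are the picks of Left and Right in A, and L', R' those in B, where
   Right of H moves first, hence the position (R', L') in B. *)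
Definition left_turn L R L' R' := ~ filled (red A) R /\ ~ filled (blue B) R' /\
  exists2 b, ldelL A b L R & forall c, ldelL B c R' L' -> b <= c.

Definition right_turn L R L' R' := ~ filled (red A) R /\ ~ filled (blue B) R' /\
  exists2 b, ldelR A b L R & forall c, ldelL B c R' L' -> b <= c.

(* Right has just moved in B, which counts as a pass in A. *)
Definition left_reply L R L' R' := ~ filled (red A) R /\ ~ filled (blue B) R' /\
  exists2 b, ldelR A b L R & forall c, ldelR B c R' L' -> b <= c.

Definition free_size L R L' R' := #|~: (emb L L' :|: emb R R')|.

Lemma free_size_leftA x L R L' R' :
  x \notin L :|: R -> free_size (x |: L) R L' R' < free_size L R L' R'.
Proof. by rewrite -(notin_embA _ _ _ L' R') => /ltn_card_setC_setU1; rewrite setUA embA. Qed.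

Lemma free_size_rightA x L R L' R' :
  x \notin L :|: R -> free_size L (x |: R) L' R' < free_size L R L' R'.
Proof. by rewrite -(notin_embA _ _ _ L' R') => /ltn_card_setC_setU1; rewrite setUCA embA. Qed.

Lemma free_size_leftB y L R L' R' :
  y \notin L' :|: R' -> free_size L R (y |: L') R' < free_size L R L' R'.
Proof. by rewrite -(notin_embB _ L R) => /ltn_card_setC_setU1; rewrite setUA embB. Qed.

Lemma free_size_rightB y L R L' R' :
  y \notin L' :|: R' -> free_size L R L' (y |: R') < free_size L R L' R'.
Proof. by rewrite -(notin_embB _ L R) => /ltn_card_setC_setU1; rewrite setUCA embB. Qed.

Definition wins_below n := forall L R L' R', free_size L R L' R' < n -> [/\
  left_turn L R L' R' -> lwinL H (emb L L') (emb R R'),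
  left_reply L R L' R' -> lwinL H (emb L L') (emb R R') &
  right_turn L R L' R' -> lwinR H (emb L L') (emb R R')].

Section Step.
Variables (L R : {set X}) (L' R' : {set Y}).
Hypothesis IH : wins_below (free_size L R L' R').

Lemma left_turn_win : left_turn L R L' R' -> lwinL H (emb L L') (emb R R').
Proof.
move=> [nA [nB [b hb hB]]]; have [v hv hvL] := ldelL_inv hb.
apply: (LwinL (v := iA v)); rewrite ?notin_embA // embA.
case: hvL => [/filled_blueA | hr]; [by left | right].
have [_ _ win] := IH (free_size_leftA L' R' hv).
by apply: win; split=> //; split=> //; exists b.
Qed.

Lemma right_turn_win : right_turn L R L' R' -> lwinR H (emb L L') (emb R R').
Proof.
move=> [nA [nB [b hb hB]]]; have [[x0 hx0] hallA _] := ldelR_inv hb.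
apply: LwinR; first by exists (iA x0); rewrite notin_embA.
move=> w; case: (iAB_cover w) => [[x ->] | [y ->]].
  rewrite notin_embA embA => hx; have [nAx hbx] := hallA x hx.
  split; first exact: not_filled_redH.
  have [win _ _] := IH (free_size_rightA L' R' hx).
  by apply: win; split=> //; split=> //; exists b.
rewrite notin_embB embB => hy; have hy' : y \notin R' :|: L' by rewrite setUC.
have nBy : ~ filled (blue B) (y |: R').
  move=> hf; have /hB := LdelL (k := 0) hy' (or_introl hf).
  by rewrite leqn0 => /eqP b0; move: hb; rewrite b0 => /ldelR0.
split; first exact: not_filled_redH.
have [_ win _] := IH (free_size_rightB L R hy).
apply: win; split=> //; split=> //; exists b => // c hc.
exact/hB/(LdelL (v := y) hy')/or_intror.
Qed.

Lemma left_reply_win : left_reply L R L' R' -> lwinL H (emb L L') (emb R R').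
Proof.
move=> [nA [nB [b hb hB]]]; have [_ _ [b' eb hb']] := ldelR_inv hb; subst b.
have freeB y : y \notin R' :|: L' -> iB y \notin emb L L' :|: emb R R'.
  by rewrite notin_embB setUC.
case: (classic (exists2 y, y \notin R' :|: L' & filled (red B) (y |: L'))).
  move=> [y hy hf]; apply: (LwinL (v := iB y)); first exact: freeB.
  by rewrite embB; left; apply: filled_redB.
move=> no_fill.
case: (classic (exists2 y, y \notin R' :|: L' &
                  forall c, ldelL B c R' (y |: L') -> b'.+1 <= c)).
  move=> [y hy hBy]; apply: (LwinL (v := iB y)); first exact: freeB.
  rewrite embB; right; have hy' : y \notin L' :|: R' by rewrite setUC.
  have [_ _ win] := IH (free_size_leftB L R hy').
  by apply: win; split=> //; split=> //; exists b'.+1.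
move=> no_reply.
case: (classic (forall c, ldelL B c R' L' -> b' <= c)) => [hpass | no_pass].
  have [v hv hvL] := ldelL_inv hb'.
  apply: (LwinL (v := iA v)); rewrite ?notin_embA // embA.
  case: hvL => [/filled_blueA | hr]; [by left | right].
  have [_ _ win] := IH (free_size_leftA L' R' hv).
  by apply: win; split=> //; split=> //; exists b'.
exfalso; suff /hB : ldelR B b' R' L' by rewrite ltnn.
apply: ldelR_of_replies; last exact: not_lower_bound.
move=> y hy; split; first by move=> hf; apply: no_fill; exists y.
have [c cb hc] : exists2 c, c < b'.+1 & ldelL B c R' (y |: L').
  by apply: not_lower_bound => hBy; apply: no_reply; exists y.
by exists c.
Qed.

End Step.

Lemma wins_all n : wins_below n.
Proof.
elim: n => [// | n IH] L R L' R' hn.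
have IH' : wins_below (free_size L R L' R').
  by move=> ? ? ? ? h; apply: IH; apply: leq_trans h _.
by split; [apply: left_turn_win | apply: left_reply_win | apply: right_turn_win].
Qed.

Lemma union_left_wins d d' :
  set0 \notin red A -> set0 \notin blue B ->
  ldelL A d set0 set0 -> (forall k, ldelL B k set0 set0 -> d' <= k) ->
  d <= d' -> lwinL H set0 set0.
Proof.
move=> h0A h0B hd hd' dd'.
have <- : emb set0 set0 = set0 by rewrite /emb !imset0 setU0.
have [win _ _] := wins_all (ltnSn (free_size set0 set0 set0 set0)).
apply: win; split; first exact: not_filled_set0.
split; first exact: not_filled_set0.
by exists d => // k /hd'; apply: leq_trans.
Qed.

End Union.

Theorem proposition3 (V V' : finType) (G : game V) (G' : game V') (d d' : nat) :
  hypergraph_game G -> hypergraph_game G' ->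
  left_wins_first G -> right_wins_first G' ->
  left_delay G d -> right_delay G' d' ->
  ((d <= d')%N -> left_wins_first (gunion G G')) /\
  ((d' <= d)%N -> right_wins_first (gunion G G')) /\
  (left_wins_first (gunion G G') \/ right_wins_first (gunion G G')).
Proof.
move=> [hGb hGr] [hG'b hG'r] _ _ [hd hdmin] [hd' hd'min].
have inl_inj : injective (@inl V V') by move=> ? ? [].
have inr_inj : injective (@inr V V') by move=> ? ? [].
have left_win : d <= d' -> left_wins_first (gunion G G').
  apply: (union_left_wins (B := swap G') inl_inj inr_inj) => //.
  by case=> [x | y]; [left; exists x | right; exists y].
have right_win : d' <= d -> right_wins_first (gunion G G').
  apply: (union_left_wins (A := swap G') (B := G) inr_inj inl_inj) => //=;
    try by rewrite setUC.
  by case=> [x | y]; [right; exists x | left; exists y].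
split=> //; split=> //.
by case: (leqP d d') => h; [left; apply: left_win | right; apply/right_win/ltnW].
Qed.
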